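(* For any instance oracle $f$ with $\max\{|f(G,v)|: G \text{ an } n\text{-node graph}, v\in G\}=O(n)$ and any deterministic exploration algorithm $A$, there exist a constant $c>0$ and infinitely many $n$ such that for each of them some $n$-node graph $G$ and starting node $v$ force the agent executing $A$ with input $f(G,v)$ from $v$ to make at least $c n^2$ edge traversals before completing exploration. That is, exploration takes time $\Omega(n^2)$ on some $n$-node graph, for arbitrarily large $n$.
   Context: Model: a graph is a simple connected undirected graph with $n$ nodes. Nodes are unlabeled; at each node of degree $d$ the incident edges carry distinct port numbers $0,\dots,d-1$, arbitrarily assigned. A mobile agent starts at some node. At each step, located at a node $u$ whose degree it knows, it chooses a port at $u$ and traverses the corresponding edge to a neighbor $w$; upon arrival it learns the port number of this edge at $w$ and the degree of $w$. The agent must visit all nodes and stop; the time of exploration is the number of edge traversals. A deterministic exploration algorithm receives as input a binary string (advice); its size is its length. An instance oracle is a function assigning a binary string $f(G,v)$ to each pair $(G,v)$ where $G$ is a port-numbered graph and $v$ is the starting node of the agent. *)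

From HB Require Import structures.
From mathcomp Require Import all_boot all_order all_algebra.
Set Implicit Arguments. Unset Strict Implicit. Unset Printing Implicit Defensive.

(* A port-numbered graph on n nodes (node names 'I_n exist only in the
   representation; the agent never sees them).  At node u the ports are
   0, ..., deg u - 1; port p at u leads to node [nbr u p] and the edge has
   port number [back u p] at that neighbour. Values of nbr/back at p >= deg u
   are irrelevant. *)
Record pgraph (n : nat) := PGraph {
  deg  : 'I_n -> nat;
  nbr  : 'I_n -> nat -> 'I_n;
  back : 'I_n -> nat -> nat
}.

Definition adjacent n (G : pgraph n) : rel 'I_n :=
  fun u w => has (fun p => nbr G u p == w) (iota 0 (deg G u)).

Definition wf_pgraph n (G : pgraph n) : Prop :=
  [/\
      (forall u p, p < deg G u ->
         [/\ back G u p < deg G (nbr G u p),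
             nbr G (nbr G u p) (back G u p) = u &
             back G (nbr G u p) (back G u p) = p]),
      (forall u p, p < deg G u -> nbr G u p != u),
      (forall u p q, p < deg G u -> q < deg G u -> nbr G u p = nbr G u q -> p = q) &
      (forall u w, connect (adjacent G) u w)].

(* A deterministic exploration algorithm: given the advice string, the degree
   of the starting node, and the history of observations so far (a list of
   triples (port taken, port of arrival at the new node, degree of the new
   node)), it either stops (None) or chooses a port (Some p). *)
Definition algorithm := seq bool -> nat -> seq (nat * nat * nat) -> option nat.

Definition oracle := forall n, pgraph n -> 'I_n -> seq bool.

(* Configuration after t traversals: current node and observation history;
   None if the algorithm has stopped before or chose a non-existing port. *)
Fixpoint run (A : algorithm) (adv : seq bool) n (G : pgraph n) (v : 'I_n)
    (t : nat) : option ('I_n * seq (nat * nat * nat)) :=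
  match t with
  | 0 => Some (v, [::])
  | t'.+1 =>
      match run A adv G v t' with
      | None => None
      | Some (u, h) =>
          match A adv (deg G v) h with
          | None => None
          | Some p =>
              if p < deg G u then
                Some (nbr G u p, rcons h (p, back G u p, deg G (nbr G u p)))
              else None
          end
      end
  end.

Definition explores_in (A : algorithm) (adv : seq bool) n (G : pgraph n)
    (v : 'I_n) (t : nat) : Prop :=
  (exists u h, run A adv G v t = Some (u, h) /\ A adv (deg G v) h = None) /\
  (forall w : 'I_n, exists s h, s <= t /\ run A adv G v s = Some (w, h)).

Definition linear_size_oracle (f : oracle) : Prop :=
  exists (C N0 : nat), forall n, N0 <= n ->
    forall (G : pgraph n) (v : 'I_n), wf_pgraph G -> size (f n G v) <= C * n.

From HB Require Import structures.
From mathcomp Require Import all_boot all_order all_algebra.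
From mathcomp Require Import zify ring.
From Stdlib Require Import Classical.
Set Implicit Arguments. Unset Strict Implicit. Unset Printing Implicit Defensive.

(* Let m = k + 1 and, for g : 'I_m -> 'I_m, let [graph_of g] be K_{m,m} with the
   edge a_i b_(g i) subdivided by a new node c_i, for every i.  All these m^m
   graphs look alike locally (same degrees everywhere), and following an edge
   reveals nothing about g beyond whether a subdivision node not seen before has
   just been reached.  So the advice together with the set of times of these
   discoveries determines the whole run, and a run that visits every c_i
   determines g.  If all m^m graphs were explored in fewer than T steps with
   advice of length L = O(n), then m^m <= (L+1) 2^L C(T, m); as
   C(T, m) m^m <= (4T)^m, this fails for T = n^2 / K with a constant K. *)

Lemma ffact_leq_expn n m : n ^_ m <= n ^ m.
Proof.
elim: m => [|m IHm] //.
by rewrite ffactnSr expnS mulnC leq_mul ?leq_subr.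
Qed.

Lemma bin_fact_leq_expn n m : 'C(n, m) * m`! <= n ^ m.
Proof. by rewrite bin_ffact ffact_leq_expn. Qed.

Lemma expn2_leq_fact i : 2 ^ i <= 2 * i`!.
Proof.
elim: i => [|[|i] IHi] //; rewrite expnS factS leq_pmul2l //.
by apply: leq_trans IHi _; rewrite leq_mul2r ltnS orbT.
Qed.

Lemma bin_expn_leq k i : i <= k -> 'C(k, i) * k ^ (k - i) * 2 ^ i <= 2 * k ^ k.
Proof.
move=> le_ik; apply: leq_trans (leq_mul (leqnn _) (expn2_leq_fact i)) _.
have -> : k ^ k = k ^ (k - i) * k ^ i by rewrite -expnD subnK.
have -> : 'C(k, i) * k ^ (k - i) * (2 * i`!) = 2 * (k ^ (k - i) * ('C(k, i) * i`!)).
  by ring.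
by rewrite !leq_mul2l bin_fact_leq_expn !orbT.
Qed.

Lemma sum_geometric_leq (a : nat -> nat) B N :
  (forall i, i < N -> a i * 2 ^ i <= B) -> \sum_(i < N) a i <= 2 * B.
Proof.
move=> le_aB; suff : (\sum_(i < N) a i) * 2 ^ N + 2 * B <= 2 * B * 2 ^ N.
  by move/(leq_trans (leq_addr _ _)); rewrite leq_pmul2r ?expn_gt0.
elim: N le_aB => [|N IHN] le_aB; first by rewrite big_ord0; lia.
rewrite big_ord_recr /= expnS.
have := IHN (fun i lt_iN => le_aB i (ltnW lt_iN)); have := le_aB N (ltnSn N).
set S := \sum_(i < N) a i; set P := 2 ^ N; nia.
Qed.

Lemma succ_expn_leq k : k.+1 ^ k <= 4 * k ^ k.
Proof.
have -> : k.+1 ^ k = \sum_(i < k.+1) 'C(k, i) * k ^ (k - i).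
  rewrite -[X in X ^ k]addn1 expnDn; apply: eq_bigr => i _; by rewrite exp1n muln1.
rewrite (_ : 4 * _ = 2 * (2 * k ^ k)); last by rewrite mulnA.
apply: (@sum_geometric_leq (fun i => 'C(k, i) * k ^ (k - i))) => i.
by rewrite ltnS; apply: bin_expn_leq.
Qed.

Lemma expn_self_leq_fact k : k ^ k <= 4 ^ k * k`!.
Proof.
elim: k => [|k IHk] //.
have -> : 4 ^ k.+1 * k.+1`! = k.+1 * (4 * (4 ^ k * k`!)) by rewrite expnS factS; ring.
by rewrite expnS leq_pmul2l // (leq_trans (succ_expn_leq k)) // leq_mul2l IHk.
Qed.

Lemma bin_expn_self_leq T m : 'C(T, m) * m ^ m <= (4 * T) ^ m.
Proof.
rewrite (leq_trans (leq_mul (leqnn _) (expn_self_leq_fact m))) //.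
by rewrite mulnCA expnMn leq_mul2l bin_fact_leq_expn orbT.
Qed.

Lemma succ_mul_expn2_leq L : L.+1 * 2 ^ L <= 4 ^ L.
Proof. by rewrite (_ : 4 = 2 * 2) // expnMn leq_mul2r ltn_expl ?orbT. Qed.

Lemma expn_self_gt_count m L q T : 0 < m ->
  4 ^ L <= q ^ m -> q * (4 * T) < m * m -> L.+1 * 2 ^ L * 'C(T, m) < m ^ m.
Proof.
move=> m_gt0 /(leq_trans (succ_mul_expn2_leq L)) le_Lq lt_qT.
rewrite -(ltn_pmul2r (_ : 0 < m ^ m)) ?expn_gt0 ?m_gt0 //.
apply: leq_ltn_trans (_ : _ <= q ^ m * (4 * T) ^ m) _.
  by rewrite -mulnA leq_mul // bin_expn_self_leq.
by rewrite -!expnMn ltn_exp2r.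
Qed.

Lemma count_threshold_lt q k : 0 < q -> 72 * q <= k ->
  q * (4 * ((3 * k.+1) ^ 2 %/ (72 * q)).+1) < k.+1 * k.+1.
Proof.
move=> q_gt0 le_k; have := leq_divM ((3 * k.+1) ^ 2) (72 * q); set D := _ %/ _ => le_D.
have le_qD : 8 * (q * D) <= k.+1 * k.+1 by nia.
have lt_q : 8 * q < k.+1 * k.+1 by nia.
lia.
Qed.

Definition bits_code L (s : seq bool) : 'I_L.+1 * {ffun 'I_L -> bool} :=
  (inord (size s), [ffun i : 'I_L => nth false s i]).

Lemma bits_code_inj L s1 s2 : size s1 <= L -> size s2 <= L ->
  bits_code L s1 = bits_code L s2 -> s1 = s2.
Proof.
move=> le_s1L le_s2L [/(congr1 val)]; rewrite /= !inordK // => eq_size /ffunP eq_nth.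
apply: (eq_from_nth (x0 := false) eq_size) => i lt_is1.
by have := eq_nth (Ordinal (leq_trans lt_is1 le_s1L)); rewrite !ffunE.
Qed.

Section Construction.

Variable k : nat.
Local Notation m := k.+1.

Definition nvert := 3 * m.

Lemma nvert_gt0 : 0 < nvert. Proof. by rewrite muln_gt0. Qed.

Definition start : 'I_nvert := Ordinal nvert_gt0.

Definition node (x : nat) : 'I_nvert := insubd start x.

Lemma val_node x : x < nvert -> val (node x) = x.
Proof. by move=> lt_x; rewrite val_insubd lt_x. Qed.

Definition deg_at (x : nat) := if x < 2 * m then m else 2.

Lemma deg_at_lt x p : p < deg_at x -> (x < 2 * m -> p < m) /\ (2 * m <= x -> p < 2).
Proof. rewrite /deg_at; case: ifP => ? ?; split=> *; lia. Qed.

Variable g : {ffun 'I_m -> 'I_m}.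

Definition gat (x : nat) : nat := g (inord x).

Lemma gat_lt x : gat x < m. Proof. exact: ltn_ord. Qed.

(* Node [i] is a_i, node [m + j] is b_j and node [2 * m + i] is c_i (i, j < m).
   The graph is K_{m,m} on the a's and b's, with each edge a_i b_(g i) subdivided
   by c_i; port j of a_i leads to b_j and port i of b_j to a_i (or to c_i when
   j = g i), port 0 of c_i leads to a_i and port 1 to b_(g i). *)
Definition nbr_at (x p : nat) : nat :=
  if x < m then (if p == gat x then 2 * m + x else m + p)
  else if x < 2 * m then (if gat p == x - m then 2 * m + p else p)
  else (if p == 0 then x - 2 * m else m + gat (x - 2 * m)).

Definition back_at (x p : nat) : nat :=
  if x < m then (if p == gat x then 0 else x)
  else if x < 2 * m then (if gat p == x - m then 1 else x - m)
  else (if p == 0 then gat (x - 2 * m) else x - 2 * m).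

Lemma nbr_at_left x p : x < m ->
  nbr_at x p = (if p == gat x then 2 * m + x else m + p) /\
  back_at x p = (if p == gat x then 0 else x).
Proof. by move=> lt_x; rewrite /nbr_at /back_at lt_x. Qed.

Lemma nbr_at_right x p : m <= x < 2 * m ->
  nbr_at x p = (if gat p == x - m then 2 * m + p else p) /\
  back_at x p = (if gat p == x - m then 1 else x - m).
Proof.
by case/andP=> le_x lt_x; rewrite /nbr_at /back_at ltnNge le_x lt_x.
Qed.

Lemma nbr_at_subdiv x p : 2 * m <= x ->
  nbr_at x p = (if p == 0 then x - 2 * m else m + gat (x - 2 * m)) /\
  back_at x p = (if p == 0 then gat (x - 2 * m) else x - 2 * m).
Proof.
move=> le_x; have [/negbTE lt_xm /negbTE lt_x2m] : ~~ (x < m) /\ ~~ (x < 2 * m).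
  by rewrite -!leqNgt; split; lia.
by rewrite /nbr_at /back_at lt_xm lt_x2m.
Qed.

End Construction.

Ltac nat_cases :=
  rewrite /nbr_at /back_at /deg_at /nvert;
  repeat (rewrite ?addKn; case: ifP => /= ?); lia.

(* Fixing the block of [u] first keeps [nat_cases] from splitting on unrelated
   branches. *)
Ltac case_block k g u p :=
  let lt_u := fresh "lt_u" in let lt_u' := fresh "lt_u" in
  case: (ltnP u k.+1) => lt_u; [ | case: (ltnP u (2 * k.+1)) => lt_u'];
  [ case: (nbr_at_left g p lt_u) => ->; (move=> -> || move=> _); case: (p =P gat g u) => ?
  | case: (nbr_at_right g p (introT andP (conj lt_u lt_u'))) => ->; (move=> -> || move=> _);
    case: (gat g p =P u - k.+1) => ?
  | case: (nbr_at_subdiv g p lt_u') => ->; (move=> -> || move=> _); case: (p =P 0) => ? ].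

Section Neighbours.
Variable k : nat.
Local Notation m := k.+1.
Variable g : {ffun 'I_m -> 'I_m}.
Variables (u p : nat).
Hypotheses (lt_u : u < nvert k) (lt_p : p < deg_at k u).

(* The following facts are never named: [nat_cases] picks them up from the context. *)
Let lt_u3m : u < 3 * m := lt_u.
Let lt_gat_subdiv : gat g (u - 2 * m) < m := gat_lt g (u - 2 * m).
Let lt_p_block := deg_at_lt lt_p.

Lemma nbr_atK :
  let w := nbr_at g u p in
  [/\ back_at g u p < deg_at k w, nbr_at g w (back_at g u p) = u
    & back_at g w (back_at g u p) = p].
Proof. move=> /=; case: lt_p_block => ? ?; case_block k g u p; split; nat_cases. Qed.

Lemma nbr_at_lt : nbr_at g u p < nvert k.
Proof. case: lt_p_block => ? ?; case_block k g u p; nat_cases. Qed.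

Lemma nbr_at_neq : nbr_at g u p != u.
Proof. case: lt_p_block => ? ?; case_block k g u p; nat_cases. Qed.

Lemma nbr_at_inj q : q < deg_at k u -> nbr_at g u p = nbr_at g u q -> p = q.
Proof.
move=> /deg_at_lt [? ?]; have := gat_lt g q.
case: lt_p_block => ? ?; case_block k g u p; nat_cases.
Qed.

End Neighbours.

Section TwoGraphs.
Variable k : nat.
Local Notation m := k.+1.
Variables (g1 g2 : {ffun 'I_m -> 'I_m}) (u p : nat).
Hypotheses (lt_u : u < nvert k) (lt_p : p < deg_at k u).

Let lt_u3m : u < 3 * m := lt_u.
Let lt_gat_subdiv : gat g1 (u - 2 * m) < m := gat_lt g1 (u - 2 * m).
Let lt_p_block := deg_at_lt lt_p.

Lemma nbr_at_eq_of_gat : 2 * m <= nbr_at g1 u p ->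
  gat g1 (nbr_at g1 u p - 2 * m) = gat g2 (nbr_at g1 u p - 2 * m) ->
  nbr_at g2 u p = nbr_at g1 u p.
Proof. case: lt_p_block => ? ?; nat_cases. Qed.

Lemma gat_eq_of_nbr_at : nbr_at g1 u p = nbr_at g2 u p -> 2 * m <= nbr_at g1 u p ->
  gat g1 (nbr_at g1 u p - 2 * m) = gat g2 (nbr_at g1 u p - 2 * m).
Proof. case: lt_p_block => ? ?; nat_cases. Qed.

Lemma nbr_at_eq : (2 * m <= nbr_at g1 u p) = (2 * m <= nbr_at g2 u p) ->
  (2 * m <= u -> gat g1 (u - 2 * m) = gat g2 (u - 2 * m)) ->
  nbr_at g1 u p = nbr_at g2 u p /\ back_at g1 u p = back_at g2 u p.
Proof. case: lt_p_block => ? ?; nat_cases. Qed.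

End TwoGraphs.

Section Agreement.
Variable k : nat.
Local Notation m := k.+1.
Variables (V : nat -> bool) (u p : nat).
Hypotheses (lt_u : u < nvert k) (lt_p : p < deg_at k u).

Definition agree_on (g1 g2 : {ffun 'I_m -> 'I_m}) :=
  forall x, V x -> 2 * m <= x -> gat g1 (x - 2 * m) = gat g2 (x - 2 * m).

Lemma nbr_at_subdiv_agree g1 g2 : agree_on g1 g2 ->
  (2 * m <= nbr_at g1 u p -> ~~ V (nbr_at g1 u p) -> 2 * m <= nbr_at g2 u p) ->
  2 * m <= nbr_at g1 u p -> 2 * m <= nbr_at g2 u p.
Proof.
move=> agreeV new_subdiv le_nbr; have [inV|] := boolP (V (nbr_at g1 u p)); last exact: new_subdiv.
by rewrite (nbr_at_eq_of_gat lt_u lt_p le_nbr (agreeV _ inV le_nbr)).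
Qed.

Lemma nbr_at_agree g1 g2 : agree_on g1 g2 -> (2 * m <= u -> V u) ->
  (2 * m <= nbr_at g1 u p) && (~~ V (nbr_at g1 u p)) =
  (2 * m <= nbr_at g2 u p) && (~~ V (nbr_at g2 u p)) ->
  nbr_at g1 u p = nbr_at g2 u p /\ back_at g1 u p = back_at g2 u p.
Proof.
move=> agreeV V_u eq_new; apply: nbr_at_eq => //; last first.
  by move=> le_u; apply: agreeV (V_u le_u) le_u.
have agreeV' : agree_on g2 g1 by move=> x Vx le_x; rewrite agreeV.
apply/idP/idP; apply: nbr_at_subdiv_agree => // le_nbr notV.
  by move: eq_new; rewrite le_nbr notV => /esym/andP[].
by move: eq_new; rewrite le_nbr notV => /andP[].
Qed.

End Agreement.

Definition graph_of k (g : {ffun 'I_k.+1 -> 'I_k.+1}) : pgraph (nvert k) :=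
  @PGraph (nvert k) (fun u => deg_at k u) (fun u p => node k (nbr_at g u p))
    (fun u p => back_at g u p).

Lemma adjacent_nbr n (G : pgraph n) u p : p < deg G u -> adjacent G u (nbr G u p).
Proof. by move=> lt_p; apply/hasP; exists p; rewrite ?mem_iota. Qed.

Lemma connect_nbr n (G : pgraph n) u p w : p < deg G u ->
  connect (adjacent G) (nbr G u p) w -> connect (adjacent G) u w.
Proof. by move/adjacent_nbr/connect1; apply: connect_trans. Qed.

Lemma adjacent_sym n (G : pgraph n) :
  (forall u p, p < deg G u ->
     nbr G (nbr G u p) (back G u p) = u /\ back G u p < deg G (nbr G u p)) ->
  symmetric (adjacent G).
Proof.
move=> nbrK; suff adj_sym u w : adjacent G u w -> adjacent G w u.
  by move=> u w; apply/idP/idP; apply: adj_sym.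
case/hasP=> p; rewrite mem_iota => lt_p /eqP <-.
have [eq_u lt_b] := nbrK u p lt_p.
by rewrite -[X in adjacent _ _ X]eq_u adjacent_nbr.
Qed.

Section GraphOf.
Variable k : nat.
Local Notation m := k.+1.
Variable g : {ffun 'I_m -> 'I_m}.
Local Notation G := (graph_of g).

Lemma val_nbr (u : 'I_(nvert k)) p : p < deg G u -> val (nbr G u p) = nbr_at g u p.
Proof. by move=> lt_p; rewrite val_node ?nbr_at_lt. Qed.

Lemma connect_start (u : 'I_(nvert k)) : connect (adjacent G) u (start k).
Proof.
pose C y := connect (adjacent G) (node k y) (start k).
have step y p : y < nvert k -> p < deg_at k y -> C (nbr_at g y p) -> C y.
  move=> lt_y lt_p C_nbr; apply: (@connect_nbr _ G _ p); first by rewrite /= val_node.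
  suff -> : nbr G (node k y) p = node k (nbr_at g y p) by [].
  by rewrite /= val_node.
have C_left0 : C 0.
  by rewrite /C (_ : node k 0 = start k) ?connect0 //; apply: val_inj; rewrite val_node.
have C_subdiv0 : C (2 * m).
  apply: (step _ 0); [by rewrite /nvert; lia | by rewrite /deg_at ltnn |].
  by case: (nbr_at_subdiv g 0 (leqnn _)) => -> _; rewrite subnn.
have C_right y : m <= y < 2 * m -> C y.
  move=> lt_y; apply: (step _ 0); [by rewrite /nvert; lia | by rewrite /deg_at ifT; lia |].
  by case: (nbr_at_right g 0 lt_y) => -> _; case: ifP; rewrite ?addn0.
have C_subdiv y : 2 * m <= y < 3 * m -> C y.
  case/andP=> le_y lt_y; apply: (step _ 1) => //; first by rewrite /deg_at ifF //; lia.
  apply: C_right; case: (nbr_at_subdiv g 1 le_y) => -> _ /=; have := gat_lt g (y - 2 * m); lia.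
have node_u : node k u = u by apply: val_inj; rewrite val_node.
suff : C u by rewrite /C node_u.
have lt_u : u < 3 * m := ltn_ord u.
have [lt_um|le_mu] := ltnP u m; last first.
  by have [lt_u2m|le_2mu] := ltnP u (2 * m); [apply: C_right | apply: C_subdiv]; apply/andP.
apply: (step _ (gat g u)) => //; first by rewrite /deg_at ifT ?gat_lt //; lia.
by apply: C_subdiv; case: (nbr_at_left g (gat g u) lt_um) => -> _; rewrite eqxx; lia.
Qed.

Lemma wf_graph_of : wf_pgraph G.
Proof.
have nbrK (u : 'I_(nvert k)) p : p < deg G u ->
    [/\ back G u p < deg G (nbr G u p), nbr G (nbr G u p) (back G u p) = u &
        back G (nbr G u p) (back G u p) = p].
  move=> lt_p; have [lt_b eq_u eq_p] := nbr_atK g (ltn_ord u) lt_p.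
  set w := nbr G u p; have val_w : val w = nbr_at g u p by rewrite val_nbr.
  have lt_bw : back G u p < deg G w by rewrite /= val_w.
  split=> //; last by rewrite /= val_w.
  by apply: val_inj; rewrite val_nbr // val_w.
split=> //.
- move=> u p lt_p; apply/eqP => /(congr1 val); rewrite val_nbr //; apply/eqP.
  exact: nbr_at_neq.
- by move=> u p q lt_p lt_q /(congr1 val); rewrite !val_nbr //; apply: nbr_at_inj.
- move=> u w; apply: connect_trans (connect_start u) _.
  rewrite (sym_connect_sym (adjacent_sym _)) ?connect_start // => v p /nbrK [] //.
Qed.

End GraphOf.

Section Runs.
Variables (A : algorithm) (f : oracle) (k : nat).
Local Notation m := k.+1.
Implicit Types g : {ffun 'I_m -> 'I_m}.

Definition advice g := f (graph_of g) (start k).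

Definition conf g s := run A (advice g) (graph_of g) (start k) s.

Definition pos g s : option nat := omap (fun c => val c.1) (conf g s).

Definition visited g s x := [exists i : 'I_s.+1, pos g i == Some x].

Definition discovers g s :=
  if pos g s.+1 is Some x then (2 * m <= x) && ~~ visited g s x else false.

Lemma confS g s : conf g s.+1 =
  if conf g s is Some (u, h) then
    if A (advice g) (deg_at k 0) h is Some p then
      if p < deg_at k u then
        Some (node k (nbr_at g u p), rcons h (p, back_at g u p, deg_at k (node k (nbr_at g u p))))
      else None
    else None
  else None.
Proof. by []. Qed.

Lemma pos_succ g s u h p : conf g s = Some (u, h) -> A (advice g) (deg_at k 0) h = Some p ->
  p < deg_at k u -> pos g s.+1 = Some (nbr_at g u p).
Proof. by move=> conf_s A_h lt_p; rewrite /pos confS conf_s A_h lt_p /= val_node ?nbr_at_lt. Qed.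

Lemma pos_succP g s x : pos g s.+1 = Some x -> exists u h p,
  [/\ conf g s = Some (u, h), A (advice g) (deg_at k 0) h = Some p, p < deg_at k u
    & x = nbr_at g u p].
Proof.
rewrite /pos confS; case: (conf g s) => [[u h]|] //.
case A_h: (A _ _ h) => [p|] //; case: ifP => // lt_p [<-].
by exists u, h, p; rewrite val_node ?nbr_at_lt.
Qed.

Lemma discovers_succ g s u h p : conf g s = Some (u, h) ->
  A (advice g) (deg_at k 0) h = Some p -> p < deg_at k u ->
  discovers g s = (2 * m <= nbr_at g u p) && ~~ visited g s (nbr_at g u p).
Proof. by move=> conf_s A_h lt_p; rewrite /discovers (pos_succ conf_s A_h lt_p). Qed.

Lemma visitedS g s x : visited g s.+1 x = visited g s x || (pos g s.+1 == Some x).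
Proof.
apply/existsP/orP => [[i]|].
  have [->|ne_is] := eqVneq (val i) s.+1; first by right.
  have lt_is : i < s.+1 by rewrite ltn_neqAle ne_is -ltnS ltn_ord.
  by move=> pos_i; left; apply/existsP; exists (Ordinal lt_is).
case=> [/existsP [i pos_i]|pos_s]; last by exists ord_max.
by exists (widen_ord (leqnSn _) i).
Qed.

Lemma visited_pos g s x : pos g s = Some x -> visited g s x.
Proof. by move=> pos_s; apply/existsP; exists ord_max; rewrite pos_s. Qed.

Lemma eq_visited g1 g2 s : (forall s', s' <= s -> conf g1 s' = conf g2 s') ->
  visited g1 s =1 visited g2 s.
Proof. by move=> eq_conf x; apply: eq_existsb => i; rewrite /pos eq_conf // -ltnS. Qed.

Definition agree_upto g1 g2 s :=
  (forall s', s' <= s -> conf g1 s' = conf g2 s') /\ agree_on (visited g1 s) g1 g2.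

Section Step.
Variables (g1 g2 : {ffun 'I_m -> 'I_m}) (s : nat).
Hypotheses (eq_adv : advice g1 = advice g2) (agree_s : agree_upto g1 g2 s)
  (eq_disc : discovers g1 s = discovers g2 s).

Lemma nbr_at_agree_run u h p : conf g1 s = Some (u, h) ->
  A (advice g1) (deg_at k 0) h = Some p -> p < deg_at k u ->
  nbr_at g1 u p = nbr_at g2 u p /\ back_at g1 u p = back_at g2 u p.
Proof.
move=> conf1 A1 lt_p; have [eq_conf agreeV] := agree_s.
have conf2 : conf g2 s = Some (u, h) by rewrite -eq_conf.
have A2 : A (advice g2) (deg_at k 0) h = Some p by rewrite -eq_adv.
apply: (nbr_at_agree (ltn_ord u) lt_p agreeV).
  by move=> _; apply: visited_pos; rewrite /pos conf1.
rewrite -(discovers_succ conf1 A1 lt_p) eq_disc (discovers_succ conf2 A2 lt_p).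
by rewrite (eq_visited eq_conf).
Qed.

Lemma agree_upto_succ : agree_upto g1 g2 s.+1.
Proof.
have [eq_conf agreeV] := agree_s.
have conf_succ : conf g1 s.+1 = conf g2 s.+1.
  rewrite !confS -eq_conf ?leqnn // -eq_adv.
  case conf1: (conf g1 s) => [[u h]|] //; case A1: (A _ _ h) => [p|] //.
  case: ifP => // lt_p; have [-> ->] := nbr_at_agree_run conf1 A1 lt_p; by [].
split=> [s'|x]; first by rewrite leq_eqVlt ltnS => /predU1P[->|/eq_conf].
rewrite visitedS => /orP[/agreeV//|/eqP/pos_succP[u [h [p [conf1 A1 lt_p ->]]]]] le_x.
have [eq_nbr _] := nbr_at_agree_run conf1 A1 lt_p.
exact: gat_eq_of_nbr_at (ltn_ord u) lt_p eq_nbr le_x.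
Qed.

End Step.

Lemma agree_upto0 g1 g2 : agree_upto g1 g2 0.
Proof.
split=> [s'|x]; first by rewrite leqn0 => /eqP->.
by case/existsP=> -[[|//] ?] /eqP[<-].
Qed.

Lemma agree_upto_discovers g1 g2 t : advice g1 = advice g2 ->
  (forall s, s < t -> discovers g1 s = discovers g2 s) -> agree_upto g1 g2 t.
Proof.
move=> eq_adv eq_disc; elim: t eq_disc => [|t IHt] eq_disc; first exact: agree_upto0.
apply: agree_upto_succ => //; first by apply: IHt => s lt_st; apply: eq_disc; apply: ltnW.
exact: eq_disc.
Qed.

Lemma explores_visited g t x : explores_in A (advice g) (graph_of g) (start k) t ->
  x < nvert k -> visited g t x.
Proof.
case=> _ /(_ (node k x)) [s [h [le_st run_s]]] lt_x.
by apply/existsP; exists (Ordinal (le_st : s < t.+1)); rewrite /pos /conf /= run_s /= val_node.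
Qed.

Lemma explores_inj g1 g2 t : advice g1 = advice g2 ->
  (forall s, s < t -> discovers g1 s = discovers g2 s) ->
  explores_in A (advice g1) (graph_of g1) (start k) t -> g1 = g2.
Proof.
move=> eq_adv eq_disc expl; have [_ agreeV] := agree_upto_discovers eq_adv eq_disc.
apply/ffunP => i; apply: val_inj.
have lt_i : 2 * m + i < nvert k by have := ltn_ord i; rewrite /nvert; lia.
by have := agreeV _ (explores_visited expl lt_i) (leq_addr _ _); rewrite addKn /gat inord_val.
Qed.

Definition discoveries g T := [set s : 'I_T | discovers g s].

Lemma discoversP g s : discovers g s ->
  exists2 x, pos g s.+1 = Some x & (2 * m <= x) && ~~ visited g s x.
Proof. by rewrite /discovers; case: (pos g s.+1) => // x; exists x. Qed.

Lemma discovers_fresh g s1 s2 x : s1 < s2 -> pos g s1.+1 = Some x -> discovers g s2 ->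
  pos g s2.+1 != Some x.
Proof.
move=> lt_s12 pos1 /discoversP[y -> /andP[_ /negP not_visited]]; apply/eqP => -[eq_yx].
apply: not_visited; apply/existsP.
by exists (Ordinal (lt_s12 : s1.+1 < s2.+1)); rewrite /= pos1 eq_yx.
Qed.

Lemma pos_lt g s x : pos g s = Some x -> x < nvert k.
Proof. by rewrite /pos; case: (conf g s) => // -[u h] [<-]; apply: ltn_ord. Qed.

Definition discovery_index g s : 'I_m := inord (odflt 0 (pos g s.+1) - 2 * m).

Lemma discovery_index_inj g s1 s2 : discovers g s1 -> discovers g s2 ->
  discovery_index g s1 = discovery_index g s2 -> s1 = s2.
Proof.
move=> disc1 disc2; have [x1 pos1 /andP[le_x1 _]] := discoversP disc1.
have [x2 pos2 /andP[le_x2 _]] := discoversP disc2.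
have := pos_lt pos1; have := pos_lt pos2; rewrite /nvert => lt_x2 lt_x1.
rewrite /discovery_index pos1 pos2 /= => /(congr1 (@nat_of_ord _)); rewrite !inordK; try lia.
move=> eq_x; have {eq_x} eq_x : x1 = x2 by lia.
have [lt_s|lt_s|//] := ltngtP s1 s2.
  by have := discovers_fresh lt_s pos1 disc2; rewrite pos2 eq_x eqxx.
by have := discovers_fresh lt_s pos2 disc1; rewrite pos1 eq_x eqxx.
Qed.

Lemma discovery_index_onto g t (i : 'I_m) :
  explores_in A (advice g) (graph_of g) (start k) t ->
  exists s, [/\ s < t, discovers g s & discovery_index g s = i].
Proof.
move=> expl; have lt_c : 2 * m + i < nvert k by have := ltn_ord i; rewrite /nvert; lia.
have /existsP[s' /eqP pos_s'] := explores_visited expl lt_c.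
have ex_visit : exists s, pos g s == Some (2 * m + i) by exists s'; rewrite pos_s'.
case: (ex_minnP ex_visit) => -[|s] /eqP pos_s first_visit.
  by move: pos_s; rewrite /pos /conf /= => -[]; lia.
exists s; split.
- by have := first_visit s'; rewrite pos_s' eqxx => /(_ isT); have := ltn_ord s'; lia.
- rewrite /discovers pos_s leq_addr /=; apply/existsP => -[j /eqP pos_j].
  by have := first_visit j; rewrite pos_j eqxx => /(_ isT); have := ltn_ord j; lia.
- by apply: val_inj; rewrite /discovery_index pos_s /= addKn inordK.
Qed.

Lemma card_discoveries g t T : explores_in A (advice g) (graph_of g) (start k) t -> t < T ->
  #|discoveries g T| = m.
Proof.
move=> expl lt_tT; pose index (s : 'I_T) := discovery_index g s.
have index_inj : {in discoveries g T &, injective index}.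
  by move=> s1 s2; rewrite !inE => disc1 disc2 /(discovery_index_inj disc1 disc2)/val_inj.
rewrite -(card_in_imset index_inj).
suff -> : index @: discoveries g T = setT by rewrite cardsT card_ord.
apply/setP => i; rewrite inE; have [s [lt_st disc_s <-]] := discovery_index_onto i expl.
by apply/imsetP; exists (Ordinal (ltn_trans lt_st lt_tT)); rewrite ?inE.
Qed.

Lemma count_explorations L T : (forall g, size (advice g) <= L) ->
  (forall g, exists2 t, explores_in A (advice g) (graph_of g) (start k) t & t < T) ->
  m ^ m <= L.+1 * 2 ^ L * 'C(T, m).
Proof.
move=> le_adv fast.
pose code g := (bits_code L (advice g), discoveries g T).
have code_inj : injective code.
  move=> g1 g2 eq_code; have [t expl lt_tT] := fast g1.
  apply: explores_inj (bits_code_inj (le_adv g1) (le_adv g2) (congr1 fst eq_code)) _ expl.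
  move=> s lt_st; have lt_sT := ltn_trans lt_st lt_tT.
  by have := congr1 (fun c : _ * {set _} => Ordinal lt_sT \in c.2) eq_code; rewrite /= !inE.
have code_sub : codom code \subset setX setT [set D : {set 'I_T} | #|D| == m].
  apply/subsetP => _ /codomP[g ->]; rewrite !inE /=.
  by have [t expl lt_tT] := fast g; rewrite (card_discoveries expl lt_tT).
have := subset_leq_card code_sub; rewrite (card_codom code_inj) cardsX cardsT card_draws.
by rewrite card_prod !card_ffun !card_ord card_bool.
Qed.

End Runs.

Import Order.TTheory GRing.Theory Num.Theory.

Lemma ratio_leq_of_ceil (K n t : nat) : 0 < K -> (n %/ K).+1 <= t ->
  (K%:R^-1 * n%:R <= t%:R :> rat)%R.
Proof.
move=> K_gt0 le_t; rewrite mulrC ler_pdivrMr ?ltr0n // -natrM ler_nat.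
by rewrite ltnW // (leq_trans (ltn_ceil n K_gt0)) // leq_mul2r le_t orbT.
Qed.

Theorem mainTheorem9 (f : oracle) (A : algorithm) :
  linear_size_oracle f ->
  exists c : rat, (0 < c)%R /\
    forall N : nat, exists n : nat, N <= n /\
      exists (G : pgraph n) (v : 'I_n), wf_pgraph G /\
        forall t : nat, explores_in A (f n G v) G v t ->
          (c * (n ^ 2)%:R <= t%:R)%R.
Proof.
case=> C [N0 le_f]; pose q := 4 ^ (3 * C); pose K := 72 * q.
have K_gt0 : 0 < K by rewrite muln_gt0 expn_gt0.
exists (K%:R^-1)%R; split=> [|N]; first by rewrite invr_gt0 ltr0n.
pose k := N + N0 + K; pose T := (nvert k ^ 2 %/ K).+1.
exists (nvert k); split; first by rewrite /nvert; lia.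
apply: NNPP => no_slow_graph.
have fast g : exists2 t, explores_in A (advice f g) (graph_of g) (start k) t & t < T.
  apply: NNPP => no_fast_run; apply: no_slow_graph.
  exists (graph_of g), (start k); split=> [|t expl]; first exact: wf_graph_of.
  by apply: ratio_leq_of_ceil; rewrite // leqNgt; apply/negP => lt_tT; apply: no_fast_run; exists t.
have le_adv (g : {ffun 'I_k.+1 -> 'I_k.+1}) : size (advice f g) <= C * nvert k.
  by apply: (le_f _ _ _ _ (wf_graph_of g)); rewrite /nvert; lia.
have := count_explorations le_adv fast; rewrite leqNgt (expn_self_gt_count (q := q)) //.
  by rewrite /q -expnM leq_exp2l // /nvert; lia.
by apply: count_threshold_lt; rewrite ?expn_gt0 // leq_addl.
Qed.
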